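(* In the setting described in the context, suppose Method 1 does not stop, and let $(x^k)_{k\in\mathbb N}$ be the generated sequence (with associated $(\bar x^k)$, $(\alpha_k)$). Then: (i) $(x^k)$ is Fejér convergent to $\operatorname{zer}(A+B)$, i.e. for every $x\in\operatorname{zer}(A+B)$, $\|x^{k+1}-x\|\le\|x^k-x\|$ for all $k$ sufficiently large; (ii) $(x^k)$ is bounded; (iii) $\lim_{k\to\infty}\Big(\langle x^k-\bar x^k-\alpha_k(A_2x^k-A_2\bar x^k),\,x^k-\bar x^k\rangle-\bar\delta\|x^k-\bar x^k\|^2\Big)=0$.
   Context: Let $\mathcal H$ be a real Hilbert space with inner product $\langle\cdot,\cdot\rangle$ and norm $\|\cdot\|$. Let $A_1:\mathcal H\to\mathcal H$ be $\beta$-cocoercive for some $\beta>0$ (i.e. $\langle A_1x-A_1y,x-y\rangle\ge\beta\|A_1x-A_1y\|^2$ for all $x,y$), let $A_2:\mathcal H\to\mathcal H$ be maximally monotone and uniformly continuous, let $B:\mathcal H\rightrightarrows\mathcal H$ be maximally monotone, and set $A:=A_1+A_2$. Assume $\operatorname{zer}(A+B):=\{x:0\in Ax+Bx\}\neq\emptyset$. $J_{\alpha B}:=(I+\alpha B)^{-1}$ for $\alpha>0$, and $P_C$ denotes the orthogonal projection onto a nonempty closed convex set $C$. Fix $\theta,\delta\in(0,1)$, $\bar\delta>0$ with $1-\delta-\bar\delta>0$, and $\alpha_{-1}>0$ with $\alpha_{-1}\le4\beta\bar\delta$. Conceptual Algorithm: pick $x^0\in\mathcal H$. Given $x^k$ and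 $\alpha_{k-1}$, for $j\in\mathbb N$ let $\bar x^k_j:=J_{\alpha_{k-1}\theta^jB}(x^k-\alpha_{k-1}\theta^jAx^k)$ and let $j(k)$ be the smallest $j\in\mathbb N$ with $\alpha_{k-1}\theta^j\langle A_2x^k-A_2\bar x^k_j,x^k-\bar x^k_j\rangle\le\delta\|x^k-\bar x^k_j\|^2$. Set $\alpha_k:=\alpha_{k-1}\theta^{j(k)}$, $\bar x^k:=J_{\alpha_kB}(x^k-\alpha_kAx^k)$, $r_k:=\frac{\bar\delta}{\alpha_k}\|x^k-\bar x^k\|^2$ and $T_k:=\{x\in\mathcal H:\langle \frac{x^k-\bar x^k}{\alpha_k}-(A_2x^k-A_2\bar x^k),x-\bar x^k\rangle\le r_k\}$. Method 1 sets $x^{k+1}:=P_{T_k}(x^k)$ and stops if $x^{k+1}=x^k$. *)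

From HB Require Import structures.
From mathcomp Require Import all_boot all_order all_algebra.
From mathcomp Require Import all_classical all_reals all_analysis.
Set Implicit Arguments. Unset Strict Implicit. Unset Printing Implicit Defensive.
Import Order.TTheory GRing.Theory Num.Theory.
Import numFieldNormedType.Exports.
Local Open Scope classical_set_scope.
Local Open Scope ring_scope.

Section Defs.
Variables (R : realType) (H : normedModType R).

(* ip is a real inner product on H inducing the norm of H.  Together with
   completeness of H (H : completeNormedModType R) this makes H a real
   Hilbert space. *)
Definition is_inner_product (ip : H -> H -> R) : Prop :=
  [/\ (forall x y, ip x y = ip y x),
      (forall a x y z, ip (a *: x + y) z = a * ip x z + ip y z) &
      (forall x, `|x| ^+ 2 = ip x x)].

Variable ip : H -> H -> R.

Definition cocoercive (beta : R) (T : H -> H) : Prop :=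
  forall x y, beta * `|T x - T y| ^+ 2 <= ip (T x - T y) (x - y).

Definition monotone_op (B : H -> set H) : Prop :=
  forall x y u v, B x u -> B y v -> 0 <= ip (u - v) (x - y).

Definition maximally_monotone (B : H -> set H) : Prop :=
  monotone_op B /\
  forall x u, (forall y v, B y v -> 0 <= ip (u - v) (x - y)) -> B x u.

Definition single_op (T : H -> H) : H -> set H := fun x => [set T x].

Definition uniformly_continuous_op (T : H -> H) : Prop :=
  forall e : R, 0 < e -> exists2 d : R, 0 < d &
    forall x y, `|x - y| < d -> `|T x - T y| < e.

(* p = J_{a B} z  i.e.  z \in p + a B p  (single-valued for maximally monotone B, a > 0) *)
Definition is_resolvent (B : H -> set H) (a : R) (z p : H) : Prop :=
  exists2 b, B p b & z = p + a *: b.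

Definition is_projection (C : set H) (z p : H) : Prop :=
  C p /\ forall y, C y -> `|z - p| <= `|z - y|.

Definition zer_sum (A : H -> H) (B : H -> set H) : set H :=
  fun x => B x (- A x).

Definition Tk (A2 : H -> H) (xk xbk : H) (ak dbar : R) : set H :=
  fun x => ip (ak^-1 *: (xk - xbk) - (A2 xk - A2 xbk)) (x - xbk)
           <= dbar / ak * `|xk - xbk| ^+ 2.

(* The sequences (x^k), (xbar^k), (alpha_k), (j(k)) are generated by Method 1
   (conceptual algorithm with x^{k+1} = P_{T_k}(x^k)) from x^0 = x 0 and alpha_{-1} = am1. *)
Definition method1 (A1 A2 : H -> H) (B : H -> set H) (theta delta dbar am1 : R)
  (x xb : nat -> H) (alpha : nat -> R) (j : nat -> nat) : Prop :=
  let aprev k := if k is k'.+1 then alpha k' else am1 in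
  let A z := A1 z + A2 z in
  let test k (i : nat) (p : H) :=
    aprev k * theta ^+ i * ip (A2 (x k) - A2 p) (x k - p) <= delta * `|x k - p| ^+ 2 in
  forall k,
    [/\ (forall i p, (i < j k)%N ->
           is_resolvent B (aprev k * theta ^+ i) (x k - (aprev k * theta ^+ i) *: A (x k)) p ->
           ~ test k i p),
        alpha k = aprev k * theta ^+ j k,
        is_resolvent B (alpha k) (x k - alpha k *: A (x k)) (xb k),
        test k (j k) (xb k) &
        is_projection (Tk A2 (x k) (xb k) (alpha k) dbar) (x k) (x k.+1)].

End Defs.

From HB Require Import structures.
From mathcomp Require Import all_boot all_order all_algebra.
From mathcomp Require Import all_classical all_reals all_analysis.
From mathcomp Require Import ring lra.
Import Order.TTheory GRing.Theory Num.Theory.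
Import numFieldNormedType.Exports.
Local Open Scope classical_set_scope.
Local Open Scope ring_scope.

(* Monotonicity of B and A2, cocoercivity of A1 and the step size bound
   alpha_k <= 4 beta dbar put every zero z of A1 + A2 + B in the half-space
   T_k, so the projection x^(k+1) = P_(T_k) x^k satisfies
   |x^k - x^(k+1)|^2 + |x^(k+1) - z|^2 <= |x^k - z|^2.  This gives Fejer
   monotonicity and boundedness, and makes the steps |x^k - x^(k+1)|
   square-summable, hence null.  Since x^(k+1) lies in T_k, the quantity in
   (iii) is at most |x^k - x^(k+1)| times the norm of the (scaled) normal of
   T_k; that normal stays bounded because the resolvent is nonexpansive and
   the uniformly continuous A2 is bounded on bounded sets.  The line search
   keeps the quantity nonnegative. *)

Set Implicit Arguments.
Unset Strict Implicit.
Unset Printing Implicit Defensive.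

Section InnerProduct.
Variables (R : realType) (H : normedModType R) (ip : H -> H -> R).
Hypothesis ip_inner : is_inner_product ip.

Lemma ipC x y : ip x y = ip y x. Proof. by case: ip_inner. Qed.

Lemma ipxx x : ip x x = `|x| ^+ 2. Proof. by case: ip_inner. Qed.

Lemma ipZDl a x y z : ip (a *: x + y) z = a * ip x z + ip y z.
Proof. by case: ip_inner. Qed.

Lemma ip0l z : ip 0 z = 0.
Proof. by have := ipZDl 1 0 0 z; rewrite scaler0 addr0 mul1r => h; lra. Qed.

Lemma ipDl x y z : ip (x + y) z = ip x z + ip y z.
Proof. by rewrite -{1}[x]scale1r ipZDl mul1r. Qed.

Lemma ipZl a x z : ip (a *: x) z = a * ip x z.
Proof. by rewrite -[a *: x]addr0 ipZDl ip0l addr0. Qed.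

Lemma ipNl x z : ip (- x) z = - ip x z.
Proof. by rewrite -scaleN1r ipZl mulN1r. Qed.

Lemma ipBl x y z : ip (x - y) z = ip x z - ip y z.
Proof. by rewrite ipDl ipNl. Qed.

Lemma ipDr x y z : ip z (x + y) = ip z x + ip z y.
Proof. by rewrite ipC ipDl ![ip _ z]ipC. Qed.

Lemma ipZr a x z : ip z (a *: x) = a * ip z x.
Proof. by rewrite ipC ipZl ipC. Qed.

Lemma ipNr x z : ip z (- x) = - ip z x.
Proof. by rewrite ipC ipNl ipC. Qed.

Lemma ipBr x y z : ip z (x - y) = ip z x - ip z y.
Proof. by rewrite ipDr ipNr. Qed.

Lemma sqr_normD u v : `|u + v| ^+ 2 = `|u| ^+ 2 + 2 * ip u v + `|v| ^+ 2.
Proof. by rewrite -!ipxx ipDl !ipDr (ipC v u); ring. Qed.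

Lemma sqr_normB u v : `|u - v| ^+ 2 = `|u| ^+ 2 - 2 * ip u v + `|v| ^+ 2.
Proof. by rewrite -!ipxx ipBl !ipBr (ipC v u); ring. Qed.

Lemma cauchy_schwarz u v : ip u v <= `|u| * `|v|.
Proof.
have [->|u0] := eqVneq u 0; first by rewrite ip0l normr0 mul0r.
have [->|v0] := eqVneq v 0; first by rewrite ipC ip0l normr0 mulr0.
have uv_gt0 : 0 < `|u| * `|v| by rewrite mulr_gt0 ?normr_gt0.
(* expand [0 <= | |v| u - |u| v |^2 = 2 |u| |v| (|u| |v| - <u, v>)] *)
have := sqr_ge0 `|(`|v| *: u - `|u| *: v)|.
rewrite sqr_normB !normrZ !normr_id ipZl ipZr => h.
have : 0 <= (`|u| * `|v|) * (`|u| * `|v| - ip u v) by nra.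
by rewrite pmulr_rge0 // subr_ge0.
Qed.

Lemma ip_sub_le_sqr_norm (beta : R) u v : 0 < beta ->
  ip u v - beta * `|u| ^+ 2 <= `|v| ^+ 2 / (4 * beta).
Proof.
move=> beta_gt0; rewrite ler_pdivlMr ?mulr_gt0 //.
have := sqr_ge0 `|(2 * beta) *: u - v|.
rewrite sqr_normB normrZ ipZl (ger0_norm (_ : 0 <= 2 * beta)); last lra.
move=> h; nra.
Qed.

Definition segment_convex (C : set H) : Prop :=
  forall p z (t : R), C p -> C z -> 0 <= t <= 1 -> C (p + t *: (z - p)).

Lemma halfspace_convex (w q : H) (r : R) :
  segment_convex [set y | ip w (y - q) <= r].
Proof.
move=> p z t /= hp hz /andP[t_ge0 t_le1].
have -> : p + t *: (z - p) - q = (p - q) + t *: (z - p) by rewrite addrAC.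
rewrite ipDr ipZr !ipBr.
rewrite !ipBr in hp hz.
have : 0 <= t * (r - (ip w z - ip w q)) by rewrite mulr_ge0 // subr_ge0.
have : 0 <= (1 - t) * (r - (ip w p - ip w q)) by rewrite mulr_ge0 ?subr_ge0.
lra.
Qed.

Lemma projection_obtuse (C : set H) y p z : segment_convex C ->
  is_projection C y p -> C z -> ip (y - p) (z - p) <= 0.
Proof.
move=> C_cvx [Cp p_min] Cz.
have key t : 0 < t -> t <= 1 -> 2 * ip (y - p) (z - p) <= t * `|z - p| ^+ 2.
  move=> t_gt0 t_le1.
  have /p_min : C (p + t *: (z - p)) by apply: C_cvx => //; rewrite ltW.
  move=> /(lerXn2r 2 (normr_ge0 _) (normr_ge0 _)).
  rewrite opprD addrA (sqr_normB (y - p)) normrZ ipZr (ger0_norm (ltW t_gt0)) => h.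
  by rewrite -(ler_pM2l t_gt0); nra.
rewrite leNgt; apply/negP => s_gt0.
set s := ip (y - p) (z - p) in s_gt0 key.
set N := `|z - p| ^+ 2 in key.
have N_ge0 : 0 <= N by rewrite sqr_ge0.
have sN_gt0 : 0 < s + N by lra.
(* the choice [t = s / (s + N)] makes [2 s <= t N] fail *)
have ht : s / (s + N) * (s + N) = s by rewrite divfK // gt_eqF.
have t_le1 : s / (s + N) <= 1 by rewrite ler_pdivrMr // mul1r; lra.
by have := key _ (divr_gt0 s_gt0 sN_gt0) t_le1; nra.
Qed.

Lemma projection_pythagoras (C : set H) y p z : segment_convex C ->
  is_projection C y p -> C z -> `|y - p| ^+ 2 + `|p - z| ^+ 2 <= `|y - z| ^+ 2.
Proof.
move=> C_cvx py Cz; have := projection_obtuse C_cvx py Cz.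
have -> : y - z = (y - p) + (p - z) by rewrite addrA subrK.
rewrite (sqr_normD (y - p)) -(opprB z p) ipNr; lra.
Qed.

Lemma cocoercive_lipschitz (beta : R) (T : H -> H) x y :
  0 < beta -> cocoercive ip beta T -> `|T x - T y| <= `|x - y| / beta.
Proof.
move=> beta_gt0 T_coco; rewrite ler_pdivlMr //.
have [->|Txy_neq0] := eqVneq `|T x - T y| 0; first by rewrite mul0r.
have Txy_gt0 : 0 < `|T x - T y| by rewrite lt_neqAle eq_sym Txy_neq0 normr_ge0.
have := le_trans (T_coco x y) (cauchy_schwarz _ _).
by move=> h; rewrite -(ler_pM2l Txy_gt0); nra.
Qed.

Lemma resolvent_forward_step (B : H -> set H) (a : R) u w p : 0 < a ->
  is_resolvent B a (u - a *: w) p -> B p (a^-1 *: (u - p) - w).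
Proof.
move=> a_gt0 [b Bpb e]; suff -> : a^-1 *: (u - p) - w = b by [].
have -> : u = p + a *: (b + w) by rewrite scalerDr addrA -e subrK.
by rewrite addrAC subrr add0r scalerA mulVf ?gt_eqF // scale1r addrK.
Qed.

Lemma resolvent_nonexpansive (B : H -> set H) (a : R) u v p q :
  0 < a -> monotone_op ip B -> is_resolvent B a u p -> is_resolvent B a v q ->
  `|p - q| <= `|u - v|.
Proof.
move=> a_gt0 B_mono [b Bpb ->] [c Bqc ->].
have mon : 0 <= a * ip (b - c) (p - q).
  by apply: mulr_ge0; [exact: ltW | exact: B_mono].
have -> : p + a *: b - (q + a *: c) = (p - q) + a *: (b - c).
  by rewrite scalerBr opprD addrACA.
rewrite -(ler_pXn2r (n := 2)) ?nnegrE // (sqr_normD (p - q)) ipZr normrZ ipC.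
by have := sqr_ge0 (`|a| * `|b - c|); lra.
Qed.

Lemma zer_sum_subset_Tk (A1 A2 : H -> H) (B : H -> set H) (beta dbar a : R) u p :
  0 < beta -> cocoercive ip beta A1 -> monotone_op ip (single_op A2) ->
  monotone_op ip B -> 0 < a -> a <= 4 * beta * dbar ->
  is_resolvent B a (u - a *: (A1 u + A2 u)) p ->
  zer_sum (fun w => A1 w + A2 w) B `<=` Tk ip A2 u p a dbar.
Proof.
move=> beta_gt0 A1_coco A2_mono B_mono a_gt0 a_le res z zer_z.
have B_mon := B_mono _ _ _ _ (resolvent_forward_step a_gt0 res) zer_z.
have A2_mon := A2_mono p z (A2 p) (A2 z) erefl erefl.
have A1_coco_z := A1_coco u z.
have young := ip_sub_le_sqr_norm (A1 u - A1 z) (u - p) beta_gt0.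
have step : `|u - p| ^+ 2 / (4 * beta) <= dbar / a * `|u - p| ^+ 2.
  rewrite mulrC ler_wpM2r ?sqr_ge0 // ler_pdivlMr // mulrC.
  by rewrite ler_pdivrMr ?mulr_gt0 //; lra.
rewrite /Tk; move: B_mon A2_mon A1_coco_z young step.
set e := a^-1 *: (u - p); set D := `|u - p| ^+ 2; clearbody e D.
rewrite ?(ipDl, ipBl, ipNl, ipDr, ipBr, ipNr).
lra.
Qed.

End InnerProduct.

Lemma uniformly_continuous_op_bounded (R : realType) (H : normedModType R)
  (T : H -> H) :
  uniformly_continuous_op T -> forall K : R, exists M : R,
  forall x y, `|x - y| <= K -> `|T x - T y| <= M.
Proof.
move=> T_uc K; have [d d_gt0 T_d] := T_uc 1 ltr01.
(* bisecting a segment doubles the admissible length at the cost of doubling the bound *)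
have T_2n n x y : `|x - y| < d * 2 ^+ n -> `|T x - T y| < 2 ^+ n.
  elim: n x y => [|n IHn] x y; first by rewrite !expr0 mulr1; exact: T_d.
  move=> xy_lt; set m := y + 2^-1 *: (x - y).
  have xm : x - m = 2^-1 *: (x - y).
    by rewrite /m opprD addrA -{1}[x - y]scale1r -scalerBl; congr (_ *: _); lra.
  have my : m - y = 2^-1 *: (x - y) by rewrite /m addrC addKr.
  have half_lt : `|2^-1 *: (x - y)| < d * 2 ^+ n.
    by rewrite normrZ ger0_norm; move: xy_lt; rewrite exprS mulrCA; lra.
  have := IHn x m; have := IHn m y; rewrite xm my => /(_ half_lt) + /(_ half_lt).
  by have := ler_distD (T m) (T x) (T y); rewrite exprS; lra.
have Kd_ge0 : 0 <= `|K| / d by rewrite divr_ge0 // ltW.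
set N := Num.Def.archi_bound (`|K| / d).
have N_lt : (N%:R : R) < 2 ^+ N by rewrite -natrX ltr_nat ltn_expl.
exists (2 ^+ N) => x y xy_le; apply/ltW/T_2n.
have : `|K| < d * 2 ^+ N.
  by rewrite -ltr_pdivrMl // mulrC (lt_trans (archi_boundP Kd_ge0) N_lt).
by have := ler_norm K; lra.
Qed.

Lemma cvg0_sqr_le_decrement (R : realType) (a u : R ^nat) :
  (forall k, 0 <= u k) -> (forall k, 0 <= a k) ->
  (forall k, u k ^+ 2 + a k.+1 <= a k) -> u @ \oo --> 0.
Proof.
move=> u_ge0 a_ge0 ua.
have a_noninc : nonincreasing_seq a.
  by apply/nonincreasing_seqP => k; have := ua k; have := sqr_ge0 (u k); lra.
have a_lb : has_lbound (range a) by exists 0 => _ [k _ <-].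
have a_cvg := nonincreasing_cvgn a_noninc a_lb.
have da_cvg : (fun k => a k - a k.+1) @ \oo --> 0.
  rewrite -(subrr (inf (range a))); apply: cvgB => //.
  by rewrite cvg_shiftS.
have u2_cvg : (fun k => u k ^+ 2) @ \oo --> 0.
  apply: (squeeze_cvgr _ (cvg_cst 0) da_cvg); apply: nearW => k.
  by rewrite sqr_ge0 /=; have := ua k; lra.
have -> : u = Num.sqrt \o (fun k => u k ^+ 2).
  by apply: funext => k /=; rewrite sqrtr_sqr ger0_norm.
by rewrite -sqrtr0; apply: continuous_cvg => //; exact: sqrt_continuous.
Qed.

Section Method1.
Variables (R : realType) (H : normedModType R) (ip : H -> H -> R)
  (A1 A2 : H -> H) (B : H -> set H) (beta theta delta dbar am1 : R)
  (x xb : nat -> H) (alpha : nat -> R) (j : nat -> nat).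
Hypotheses (ip_inner : is_inner_product ip) (beta_gt0 : 0 < beta)
  (A1_coco : cocoercive ip beta A1) (A2_mono : monotone_op ip (single_op A2))
  (A2_ucont : uniformly_continuous_op A2) (B_mono : monotone_op ip B)
  (theta01 : 0 < theta < 1) (am1_gt0 : 0 < am1) (am1_le : am1 <= 4 * beta * dbar)
  (delta_dbar : 0 <= 1 - delta - dbar)
  (method : method1 ip A1 A2 B theta delta dbar am1 x xb alpha j).

Local Notation zer := (zer_sum (fun w => A1 w + A2 w) B).

Lemma alpha_gt0_le k : 0 < alpha k <= am1.
Proof.
have theta_pow i : 0 < theta ^+ i <= 1.
  by case/andP: theta01 => t0 t1; rewrite exprn_gt0 // exprn_ile1 // ltW.
elim: k => [|k /andP[a_gt0 a_le]].
  have [_ -> _ _ _] := method 0; have /andP[t0 t1] := theta_pow (j 0%N).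
  by rewrite /= mulr_gt0 // ger_pMr.
have [_ -> _ _ _] := method k.+1; have /andP[t0 t1] := theta_pow (j k.+1).
by rewrite /= mulr_gt0 //= (le_trans _ a_le) // ger_pMr.
Qed.

Lemma Tk_contains_zer k : zer `<=` Tk ip A2 (x k) (xb k) (alpha k) dbar.
Proof.
have [_ _ res _ _] := method k; have /andP[a_gt0 a_le] := alpha_gt0_le k.
apply: (zer_sum_subset_Tk ip_inner beta_gt0 A1_coco A2_mono B_mono a_gt0 _ res).
exact: le_trans am1_le.
Qed.

Lemma fejer_sqr z k : zer z ->
  `|x k - x k.+1| ^+ 2 + `|x k.+1 - z| ^+ 2 <= `|x k - z| ^+ 2.
Proof.
move=> zer_z; have [_ _ _ _ proj] := method k.
apply: (projection_pythagoras ip_inner _ proj (Tk_contains_zer k zer_z)).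
exact: halfspace_convex.
Qed.

Lemma dist_zer_nonincreasing z k : zer z -> `|x k.+1 - z| <= `|x k - z|.
Proof.
move=> zer_z; rewrite -(ler_pXn2r (n := 2)) ?nnegrE //.
by have := fejer_sqr k zer_z; have := sqr_ge0 `|x k - x k.+1|; lra.
Qed.

Lemma dist_zer_le_init z k : zer z -> `|x k - z| <= `|x 0 - z|.
Proof.
by move=> zer_z; elim: k => // k; apply: le_trans (dist_zer_nonincreasing _ _).
Qed.

Lemma step_cvg0 z : zer z -> (fun k => `|x k - x k.+1|) @ \oo --> 0.
Proof.
move=> zer_z; apply: (@cvg0_sqr_le_decrement _ (fun k => `|x k - z| ^+ 2)).
- by move=> k; exact: normr_ge0.
- by move=> k; exact: sqr_ge0.
- by move=> k; exact: fejer_sqr.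
Qed.

Lemma dist_resolvent_bounded z : zer z -> exists M, forall k, `|x k - xb k| <= M.
Proof.
move=> zer_z; set rho := `|x 0 - z|.
have [M A2_M] := uniformly_continuous_op_bounded A2_ucont rho.
exists (2 * rho + am1 * (rho / beta + M)) => k.
have [_ _ res _ _] := method k; have /andP[a_gt0 a_le] := alpha_gt0_le k.
have res_z : is_resolvent B (alpha k) (z - alpha k *: (A1 z + A2 z)) z.
  by exists (- (A1 z + A2 z)); rewrite // scalerN.
have xb_z := resolvent_nonexpansive ip_inner a_gt0 B_mono res res_z.
have x_z : `|x k - z| <= rho := dist_zer_le_init k zer_z.
have A1_lip := cocoercive_lipschitz ip_inner (x k) z beta_gt0 A1_coco.
have A2_bd := A2_M _ _ x_z.
have -> : x k - xb k = (x k - z) - (xb k - z) by rewrite opprB addrA subrK.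
set Q := A1 (x k) + A2 (x k) - (A1 z + A2 z).
have e : x k - alpha k *: (A1 (x k) + A2 (x k)) - (z - alpha k *: (A1 z + A2 z))
    = (x k - z) - alpha k *: Q by rewrite scalerBr !opprD addrACA.
rewrite e in xb_z.
have Q_le : `|Q| <= rho / beta + M.
  have : `|x k - z| / beta <= rho / beta by rewrite ler_pM2r ?invr_gt0.
  have := ler_normD (A1 (x k) - A1 z) (A2 (x k) - A2 z).
  by rewrite /Q opprD addrACA; lra.
have aQ_le : alpha k * `|Q| <= am1 * (rho / beta + M).
  by rewrite ler_pM ?normr_ge0 // ltW.
have := ler_normB (x k - z) (alpha k *: Q); rewrite normrZ (ger0_norm (ltW a_gt0)).
by have := ler_normB (x k - z) (xb k - z); lra.
Qed.

Lemma iterates_bounded z : zer z -> exists M, forall k, `|x k| <= M.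
Proof.
move=> zer_z; exists (`|x 0 - z| + `|z|) => k.
have := ler_normD (x k - z) z; rewrite subrK.
by have := dist_zer_le_init k zer_z; lra.
Qed.

Local Notation dir k := (x k - xb k - alpha k *: (A2 (x k) - A2 (xb k))).

Lemma residual_ge0 k : 0 <= ip (dir k) (x k - xb k) - dbar * `|x k - xb k| ^+ 2.
Proof.
have [_ a_eq _ test _] := method k; rewrite -a_eq in test.
rewrite (ipBl ip_inner) (ipZl ip_inner) (ipxx ip_inner).
by have := mulr_ge0 delta_dbar (sqr_ge0 `|x k - xb k|); lra.
Qed.

Lemma residual_le k : ip (dir k) (x k - xb k) - dbar * `|x k - xb k| ^+ 2
  <= `|dir k| * `|x k - x k.+1|.
Proof.
have [_ _ _ _ [Tk_next _]] := method k; have /andP[a_gt0 _] := alpha_gt0_le k.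
have dirE : dir k = alpha k *: ((alpha k)^-1 *: (x k - xb k) - (A2 (x k) - A2 (xb k))).
  by rewrite [RHS]scalerBr scalerA mulfV ?gt_eqF // scale1r.
have dir_next : ip (dir k) (x k.+1 - xb k) <= dbar * `|x k - xb k| ^+ 2.
  have -> : dbar * `|x k - xb k| ^+ 2
      = alpha k * (dbar / alpha k * `|x k - xb k| ^+ 2) by field; rewrite gt_eqF.
  by rewrite dirE (ipZl ip_inner) ler_pM2l.
have := cauchy_schwarz ip_inner (dir k) (x k - x k.+1).
have -> : ip (dir k) (x k - xb k)
    = ip (dir k) (x k - x k.+1) + ip (dir k) (x k.+1 - xb k).
  by rewrite -(ipDr ip_inner) addrA subrK.
lra.
Qed.

Lemma dir_bounded z : zer z -> exists C, forall k, `|dir k| <= C.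
Proof.
move=> zer_z; have [M d_le] := dist_resolvent_bounded zer_z.
have [M2 A2_M2] := uniformly_continuous_op_bounded A2_ucont M.
exists (M + am1 * M2) => k; have /andP[a_gt0 a_le] := alpha_gt0_le k.
have : alpha k * `|A2 (x k) - A2 (xb k)| <= am1 * M2.
  by rewrite ler_pM ?normr_ge0 ?A2_M2 // ltW.
have := ler_normB (x k - xb k) (alpha k *: (A2 (x k) - A2 (xb k))).
by rewrite normrZ (ger0_norm (ltW a_gt0)); have := d_le k; lra.
Qed.

Lemma residual_cvg0 z : zer z ->
  (fun k => ip (dir k) (x k - xb k) - dbar * `|x k - xb k| ^+ 2) @ \oo --> 0.
Proof.
move=> zer_z; have [C dir_le] := dir_bounded zer_z.
have step_C : (fun k => C * `|x k - x k.+1|) @ \oo --> 0.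
  by rewrite -(mulr0 C); apply: cvgM; [exact: cvg_cst | exact: step_cvg0 zer_z].
apply: (squeeze_cvgr _ (cvg_cst 0) step_C); apply: nearW => k.
rewrite residual_ge0 (le_trans (residual_le k)) //.
by rewrite ler_wpM2r ?normr_ge0.
Qed.

End Method1.

Theorem proposition4p7 (R : realType) (H : completeNormedModType R)
  (ip : H -> H -> R) (A1 A2 : H -> H) (B : H -> set H)
  (beta theta delta dbar am1 : R)
  (x xb : nat -> H) (alpha : nat -> R) (j : nat -> nat) :
  is_inner_product ip ->
  0 < beta -> cocoercive ip beta A1 ->
  maximally_monotone ip (single_op A2) -> uniformly_continuous_op A2 ->
  maximally_monotone ip B ->
  zer_sum (fun z => A1 z + A2 z) B !=set0 ->
  0 < theta < 1 -> 0 < delta < 1 -> 0 < dbar -> 0 < 1 - delta - dbar ->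
  0 < am1 -> am1 <= 4 * beta * dbar ->
  method1 ip A1 A2 B theta delta dbar am1 x xb alpha j ->
  (* Method 1 does not stop *)
  (forall k, x k.+1 <> x k) ->
  [/\ (* (i) Fejer convergence to zer(A+B) *)
      (forall z, zer_sum (fun w => A1 w + A2 w) B z ->
         exists N, forall k, (N <= k)%N -> `|x k.+1 - z| <= `|x k - z|),
      (* (ii) boundedness *)
      (exists M : R, forall k, `|x k| <= M) &
      (* (iii) *)
      (fun k => ip (x k - xb k - alpha k *: (A2 (x k) - A2 (xb k))) (x k - xb k)
                - dbar * `|x k - xb k| ^+ 2) @ \oo --> (0 : R)].
Proof.
move=> ip_inner beta_gt0 A1_coco [A2_mono _] A2_ucont [B_mono _] [z zer_z]
  theta01 _ _ /ltW delta_dbar am1_gt0 am1_le method _.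
split.
- move=> w zer_w; exists 0%N => k _.
  exact: (dist_zer_nonincreasing ip_inner beta_gt0 A1_coco A2_mono B_mono
    theta01 am1_gt0 am1_le method k zer_w).
- exact: (iterates_bounded ip_inner beta_gt0 A1_coco A2_mono B_mono
    theta01 am1_gt0 am1_le method zer_z).
- exact: (residual_cvg0 ip_inner beta_gt0 A1_coco A2_mono A2_ucont B_mono
    theta01 am1_gt0 am1_le delta_dbar method zer_z).
Qed.
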